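(* For all $P,Q\in\mathbf{R}^3$, $\rho_t(P,Q)\to d_E(P,Q)$ as $t$ increases to $1$ (i.e. $\lim_{t\to 1^-}\rho_t(P,Q)=d_E(P,Q)$).
   Context: $d_E$ denotes the Euclidean metric on $\mathbf{R}^3$. For $0<t\leq 1$ let $\alpha=\sin^{-1}\!\left(\frac{\sqrt{2-t^2}-t}{2}\right)$. For $X,Y\in\mathbf{R}^3$ with $d_E(X,Y)\leq 2$, choose a sphere of radius $1$ with center $C$ containing $X$ and $Y$, let $X'=2C-X$, and define $$d_t(X,Y)=\begin{cases} d_E(X,Y) & \text{if } \angle XCY\leq \pi-2\alpha,\\ 2t+d_E(X',Y) & \text{if } \angle XCY>\pi-2\alpha,\end{cases}$$ which depends only on $s=d_E(X,Y)$ (since $\angle XCY=2\sin^{-1}(s/2)$ and $d_E(X',Y)=\sqrt{4-s^2}$). For $P,Q\in\mathbf{R}^3$ let $\Gamma_{P,Q}$ be the set of finite sequences $(X_0,\dots,X_n)$, $n\in\mathbf{N}$, in $\mathbf{R}^3$ with $X_0=P$, $X_n=Q$, $d_E(X_{i-1},X_i)\leq 2$ for $1\leq i\leq n$, and $$\rho_t(P,Q)=\inf_{(X_0,\dots,X_n)\in\Gamma_{P,Q}}\sum_{i=1}^n d_t(X_{i-1},X_i).$$ *)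

From Stdlib Require Import Reals List.
From Coquelicot Require Import Coquelicot.
Open Scope R_scope.

Definition pt : Type := (R * R * R)%type.

Definition dE (X Y : pt) : R :=
  let '(x1, x2, x3) := X in let '(y1, y2, y3) := Y in
  sqrt ((x1 - y1) ^ 2 + (x2 - y2) ^ 2 + (x3 - y3) ^ 2).

Definition alpha (t : R) : R := asin ((sqrt (2 - t ^ 2) - t) / 2).

(* angle XCY for two points at distance s on a unit sphere centered at C *)
Definition angleXCY (s : R) : R := 2 * asin (s / 2).

(* d_E(X', Y) with X' = 2C - X the antipode of X *)
Definition dE_antipode (s : R) : R := sqrt (4 - s ^ 2).

(* d_t(X,Y), for d_E(X,Y) <= 2 *)
Definition d_t (t : R) (X Y : pt) : R :=
  let s := dE X Y in
  if Rle_dec (angleXCY s) (PI - 2 * alpha t) then s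
  else 2 * t + dE_antipode s.

(* The sequence (X_0,...,X_n) is represented by X_0 and the list [X_1;...;X_n]. *)
Fixpoint steps_ok (x : pt) (l : list pt) : Prop :=
  match l with
  | nil => True
  | y :: l' => dE x y <= 2 /\ steps_ok y l'
  end.

Fixpoint chain_cost (t : R) (x : pt) (l : list pt) : R :=
  match l with
  | nil => 0
  | y :: l' => d_t t x y + chain_cost t y l'
  end.

Definition chain_costs (t : R) (P Q : pt) (v : R) : Prop :=
  exists l : list pt, steps_ok P l /\ last l P = Q /\ v = chain_cost t P l.

(* rho_t(P,Q) as an extended real infimum (it is in fact always finite) *)
Definition rho (t : R) (P Q : pt) : Rbar := Glb_Rbar (chain_costs t P Q).

(* For steps of Euclidean length at most 1 the angle 2 asin (s/2) is at most pi/2, while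
   alpha t <= pi/4, so d_t coincides with d_E there; cutting the segment [P,Q] into such
   steps gives rho_t(P,Q) <= d_E(P,Q).  Conversely every admissible step costs at least
   t d_E (in the second case because 2t >= t s for s <= 2), so by the triangle inequality
   rho_t(P,Q) >= t d_E(P,Q).  Squeezing as t -> 1 gives the limit. *)
From Stdlib Require Import Reals List Lra Psatz.
From Coquelicot Require Import Coquelicot.
Open Scope R_scope.

Lemma dot3_le_norms (u1 u2 u3 v1 v2 v3 : R) :
  u1 * v1 + u2 * v2 + u3 * v3 <=
  sqrt (u1 ^ 2 + u2 ^ 2 + u3 ^ 2) * sqrt (v1 ^ 2 + v2 ^ 2 + v3 ^ 2).
Proof.
  rewrite <- sqrt_mult_alt by nra.
  apply Rle_trans with (Rabs (u1 * v1 + u2 * v2 + u3 * v3)); [apply Rle_abs |].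
  rewrite <- sqrt_Rsqr_abs. apply sqrt_le_1_alt. unfold Rsqr.
  assert (Hlagrange :
    (u1 ^ 2 + u2 ^ 2 + u3 ^ 2) * (v1 ^ 2 + v2 ^ 2 + v3 ^ 2)
    - (u1 * v1 + u2 * v2 + u3 * v3) * (u1 * v1 + u2 * v2 + u3 * v3)
    = (u1 * v2 - u2 * v1) ^ 2 + (u1 * v3 - u3 * v1) ^ 2 + (u2 * v3 - u3 * v2) ^ 2)
    by ring.
  assert (0 <= (u1 * v2 - u2 * v1) ^ 2 + (u1 * v3 - u3 * v1) ^ 2 + (u2 * v3 - u3 * v2) ^ 2)
    by (repeat apply Rplus_le_le_0_compat; apply pow2_ge_0).
  lra.
Qed.

Lemma norm3_triangle (u1 u2 u3 v1 v2 v3 : R) :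
  sqrt ((u1 + v1) ^ 2 + (u2 + v2) ^ 2 + (u3 + v3) ^ 2) <=
  sqrt (u1 ^ 2 + u2 ^ 2 + u3 ^ 2) + sqrt (v1 ^ 2 + v2 ^ 2 + v3 ^ 2).
Proof.
  pose proof (dot3_le_norms u1 u2 u3 v1 v2 v3) as Hdot.
  pose proof (sqrt_sqrt (u1 ^ 2 + u2 ^ 2 + u3 ^ 2)) as Hu.
  pose proof (sqrt_sqrt (v1 ^ 2 + v2 ^ 2 + v3 ^ 2)) as Hv.
  pose proof (sqrt_pos (u1 ^ 2 + u2 ^ 2 + u3 ^ 2)).
  pose proof (sqrt_pos (v1 ^ 2 + v2 ^ 2 + v3 ^ 2)).
  rewrite <- sqrt_square by lra.
  apply sqrt_le_1_alt. nra.
Qed.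

Lemma dE_ge0 (A B : pt) : 0 <= dE A B.
Proof. destruct A as [[a1 a2] a3], B as [[b1 b2] b3]; apply sqrt_pos. Qed.

Lemma dE_xx (A : pt) : dE A A = 0.
Proof.
  destruct A as [[a1 a2] a3]; unfold dE.
  replace ((a1 - a1) ^ 2 + (a2 - a2) ^ 2 + (a3 - a3) ^ 2) with 0 by ring.
  apply sqrt_0.
Qed.

Lemma dE_triangle (A B C : pt) : dE A C <= dE A B + dE B C.
Proof.
  destruct A as [[a1 a2] a3], B as [[b1 b2] b3], C as [[c1 c2] c3]; unfold dE.
  replace (a1 - c1) with ((a1 - b1) + (b1 - c1)) by ring.
  replace (a2 - c2) with ((a2 - b2) + (b2 - c2)) by ring.
  replace (a3 - c3) with ((a3 - b3) + (b3 - c3)) by ring.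
  apply norm3_triangle.
Qed.

Lemma exists_point_on_segment (A B : pt) (c : R) :
  0 <= c <= dE A B -> exists M : pt, dE A M = c /\ dE M B = dE A B - c.
Proof.
  intros Hc.
  destruct (Req_dec (dE A B) 0) as [H0 | H0].
  { exists A. rewrite dE_xx, H0. lra. }
  set (k := c / dE A B).
  assert (Hkd : k * dE A B = c) by (unfold k; field; exact H0).
  assert (Hk : 0 <= k <= 1).
  { assert (0 < dE A B) by (destruct (dE_ge0 A B); [assumption | congruence]).
    split; nra. }
  destruct A as [[a1 a2] a3], B as [[b1 b2] b3].
  exists (a1 + k * (b1 - a1), a2 + k * (b2 - a2), a3 + k * (b3 - a3)).
  assert (Hscale : forall r x1 x2 x3, 0 <= r ->
    sqrt ((r * x1) ^ 2 + (r * x2) ^ 2 + (r * x3) ^ 2) =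
    r * sqrt (x1 ^ 2 + x2 ^ 2 + x3 ^ 2)).
  { intros r x1 x2 x3 Hr.
    replace ((r * x1) ^ 2 + (r * x2) ^ 2 + (r * x3) ^ 2)
      with (r ^ 2 * (x1 ^ 2 + x2 ^ 2 + x3 ^ 2)) by ring.
    rewrite sqrt_mult_alt, sqrt_pow2 by nra. reflexivity. }
  unfold dE in *; split.
  - rewrite <- Hkd, <- Hscale by lra. f_equal. ring.
  - rewrite <- Hkd.
    replace (sqrt _ - _) with ((1 - k) * sqrt ((a1 - b1) ^ 2 + (a2 - b2) ^ 2 + (a3 - b3) ^ 2))
      by ring.
    rewrite <- Hscale by lra. f_equal. ring.
Qed.

Lemma asin_le (x y : R) : -1 <= x -> x <= y -> y <= 1 -> asin x <= asin y.
Proof.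
  intros Hx Hxy Hy.
  destruct (Rle_dec (asin x) (asin y)) as [Hle | Hlt]; [exact Hle | exfalso].
  pose proof (asin_bound x). pose proof (asin_bound y).
  assert (Hsin : sin (asin y) < sin (asin x)) by (apply sin_increasing_1; lra).
  rewrite !sin_asin in Hsin by lra. lra.
Qed.

Lemma asin_le_PI4 (x : R) : -1 <= x <= sqrt 2 / 2 -> asin x <= PI / 4.
Proof.
  intros Hx.
  assert (Hsqrt2 : sqrt 2 * sqrt 2 = 2) by (apply sqrt_sqrt; lra).
  assert (Hinv : / sqrt 2 = sqrt 2 / 2).
  { assert (0 < sqrt 2) by (apply sqrt_lt_R0; lra). field_simplify_eq; lra. }
  assert (Hle2 : sqrt 2 <= 2) by (pose proof (sqrt_pos 2); nra).
  rewrite <- asin_inv_sqrt2, Hinv. apply asin_le; lra.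
Qed.

Lemma alpha_le_PI4 (t : R) : 0 < t <= 1 -> alpha t <= PI / 4.
Proof.
  intros Ht. apply asin_le_PI4.
  assert (sqrt (2 - t ^ 2) <= sqrt 2) by (apply sqrt_le_1_alt; nra).
  pose proof (sqrt_pos (2 - t ^ 2)). lra.
Qed.

Lemma d_t_short (t : R) (A B : pt) : 0 < t <= 1 -> dE A B <= 1 -> d_t t A B = dE A B.
Proof.
  intros Ht Hs. unfold d_t. destruct Rle_dec as [_ | Hangle]; [reflexivity | exfalso].
  apply Hangle. unfold angleXCY.
  pose proof (alpha_le_PI4 t Ht).
  assert (asin (dE A B / 2) <= PI / 4).
  { apply asin_le_PI4. pose proof (dE_ge0 A B).
    assert (1 < sqrt 2) by (rewrite <- sqrt_1; apply sqrt_lt_1_alt; lra). lra. }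
  lra.
Qed.

Lemma d_t_ge (t : R) (A B : pt) : 0 <= t <= 1 -> dE A B <= 2 -> t * dE A B <= d_t t A B.
Proof.
  intros Ht Hs. pose proof (dE_ge0 A B). unfold d_t.
  destruct Rle_dec.
  - nra.
  - pose proof (sqrt_pos (4 - dE A B ^ 2)). unfold dE_antipode. nra.
Qed.

Lemma last_cons (x y : pt) (l : list pt) : last (y :: l) x = last l y.
Proof.
  revert x y. induction l as [| z l IH]; intros x y; [reflexivity |].
  change (last (z :: l) x = last (z :: l) y). rewrite !IH. reflexivity.
Qed.

Lemma chain_cost_ge (t : R) (A : pt) (l : list pt) : 0 <= t <= 1 -> steps_ok A l ->
  t * dE A (last l A) <= chain_cost t A l.
Proof.
  intros Ht. revert A. induction l as [| y l IH]; intros A Hok.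
  - simpl. rewrite dE_xx. lra.
  - destruct Hok as [Hstep Hrest]. rewrite last_cons. cbn [chain_cost].
    pose proof (d_t_ge t A y Ht Hstep). pose proof (IH y Hrest).
    pose proof (dE_triangle A y (last l y)). nra.
Qed.

Lemma chain_of_cost_dE (t : R) (n : nat) (A B : pt) : 0 < t <= 1 -> dE A B <= INR n ->
  exists l : list pt, steps_ok A l /\ last l A = B /\ chain_cost t A l = dE A B.
Proof.
  intros Ht. revert A. induction n as [| n IH]; intros A Hn;
    destruct (Rle_dec (dE A B) 1) as [Hshort | Hlong].
  1, 3: exists (B :: nil); simpl; rewrite d_t_short by lra; repeat split; lra.
  - simpl in Hn. lra.
  - rewrite S_INR in Hn.
    destruct (exists_point_on_segment A B 1) as [M [HAM HMB]]; [lra |].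
    destruct (IH M) as [l [Hok [Hlast Hcost]]]; [lra |].
    exists (M :: l). rewrite last_cons. cbn [steps_ok chain_cost].
    rewrite d_t_short, Hcost, HAM, HMB by lra.
    split; [split; [lra | exact Hok] | split; [exact Hlast | ring]].
Qed.

Lemma rho_between (t : R) (P Q : pt) : 0 < t <= 1 ->
  exists r : R, rho t P Q = Finite r /\ t * dE P Q <= r <= dE P Q.
Proof.
  intros Ht. unfold rho.
  destruct (Glb_Rbar_correct (chain_costs t P Q)) as [Hlb Hglb].
  assert (Hup : Rbar_le (Glb_Rbar (chain_costs t P Q)) (dE P Q)).
  { apply Hlb.
    destruct (INR_archimed 1 (dE P Q)) as [n Hn]; [lra |].
    destruct (chain_of_cost_dE t n P Q Ht) as [l [Hok [Hlast Hcost]]]; [lra |].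
    exists l. auto. }
  assert (Hlow : Rbar_le (t * dE P Q) (Glb_Rbar (chain_costs t P Q))).
  { apply Hglb. intros v [l [Hok [Hlast ->]]]. simpl.
    rewrite <- Hlast. apply chain_cost_ge; [lra | exact Hok]. }
  destruct (Glb_Rbar (chain_costs t P Q)) as [r | |]; simpl in *; try contradiction.
  exists r. auto.
Qed.

Theorem mainTheorem5 : forall P Q : pt,
  filterlim (fun t => rho t P Q) (at_left 1) (Rbar_locally (Finite (dE P Q))).
Proof.
  intros P Q.
  assert (Hnear : at_left 1 (fun t => 0 < t <= 1)).
  { exists (mkposreal 1 Rlt_0_1). intros t Ht Hlt.
    apply Rabs_lt_between' in Ht. simpl in Ht. lra. }
  assert (Hsqueeze : at_left 1 (fun t =>
    rho t P Q = Finite (real (rho t P Q)) /\ t * dE P Q <= real (rho t P Q) <= dE P Q)).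
  { apply (filter_imp (fun t => 0 < t <= 1)); [intros t Ht | exact Hnear].
    destruct (rho_between t P Q Ht) as [r [-> Hr]]. auto. }
  assert (Hlower : filterlim (fun t => t * dE P Q) (at_left 1) (Rbar_locally (dE P Q))).
  { apply (filterlim_filter_le_1 (F := locally 1)); [apply filter_le_within |].
    pose proof (filterlim_Rbar_mult_r (dE P Q) (Finite 1)) as Hmult.
    simpl in Hmult. rewrite Rmult_1_l in Hmult. exact Hmult. }
  assert (Hreal : filterlim (fun t => real (rho t P Q)) (at_left 1) (locally (dE P Q))).
  { apply (filterlim_le_le _ _ _ _ (filter_imp _ _ (fun t H => proj2 H) Hsqueeze) Hlower).
    apply filterlim_const. }
  apply (filterlim_ext_loc (fun t => Finite (real (rho t P Q)))).
  - apply (filter_imp _ _ (fun t H => eq_sym (proj1 H)) Hsqueeze).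
  - intros U HU. exact (Hreal _ HU).
Qed.
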